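(* Let $(E,\vdash)$ be a pure event structure and let $x,y$ be left-closed configurations of it. Then the following are equivalent: (i) $x\subseteq y$ and for every $Z\subseteq y$ there is $W\subseteq x$ with $W\vdash Z$; (ii) $x\subseteq y$ and every set $Z$ with $x\subseteq Z\subseteq y$ is a left-closed configuration of $(E,\vdash)$.
   Context: An event structure is a pair $(E,\vdash)$ with $\vdash\subseteq\mathcal{P}(E)\times\mathcal{P}(E)$; it is pure if $X\vdash Y$ implies $X\cap Y=\emptyset$. A set $X\subseteq E$ is a left-closed configuration iff for every $Y\subseteq X$ there exists $Z\subseteq X$ with $Z\vdash Y$. (Condition (i) is the step transition relation of the event structure; condition (ii) is the step transition relation of the configuration structure formed by its left-closed configurations.) *)

Definition set (E : Type) := E -> Prop.
Definition subset {E : Type} (X Y : set E) : Prop := forall e, X e -> Y e.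
Definition disjoint {E : Type} (X Y : set E) : Prop := forall e, X e -> Y e -> False.

(* An event structure (E, |-) is given by its enabling relation on subsets. *)
Definition enabling (E : Type) := set E -> set E -> Prop.

Definition pure {E : Type} (ent : enabling E) : Prop :=
  forall X Y, ent X Y -> disjoint X Y.

Definition left_closed_conf {E : Type} (ent : enabling E) (X : set E) : Prop :=
  forall Y, subset Y X -> exists Z, subset Z X /\ ent Z Y.


(* (i) -> (ii) needs no hypothesis on the event structure.  For (ii) -> (i),
   given Z ⊆ y apply (ii) to x ∪ Z: it enables Z from some W ⊆ x ∪ Z, and
   purity makes W disjoint from Z, hence W ⊆ x. *)

Definition setU {E : Type} (X Y : set E) : set E := fun e => X e \/ Y e.

Lemma subset_trans {E : Type} (X Y Z : set E) :
  subset X Y -> subset Y Z -> subset X Z.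
Proof. intros HXY HYZ e h; exact (HYZ e (HXY e h)). Qed.

Lemma subsetUl {E : Type} (X Y : set E) : subset X (setU X Y).
Proof. intros e h; left; exact h. Qed.

Lemma subsetUr {E : Type} (X Y : set E) : subset Y (setU X Y).
Proof. intros e h; right; exact h. Qed.

Lemma subUset {E : Type} (X Y Z : set E) :
  subset X Z -> subset Y Z -> subset (setU X Y) Z.
Proof. intros HX HY e [h | h]; [exact (HX e h) | exact (HY e h)]. Qed.

Lemma subset_setU_disjoint {E : Type} (W X Z : set E) :
  subset W (setU X Z) -> disjoint W Z -> subset W X.
Proof.
  intros HW Hdis e h.
  destruct (HW e h) as [hx | hz]; [exact hx | destruct (Hdis e h hz)].
Qed.

Lemma enabled_from_left_closed_between {E : Type} (ent : enabling E) (x y : set E) :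
  (forall Z, subset Z y -> exists W, subset W x /\ ent W Z) ->
  forall Z, subset x Z -> subset Z y -> left_closed_conf ent Z.
Proof.
  intros Hen Z HxZ HZy Y HYZ.
  destruct (Hen Y (subset_trans Y Z y HYZ HZy)) as [W [HWx HW]].
  exists W; split; [exact (subset_trans W x Z HWx HxZ) | exact HW].
Qed.

Lemma left_closed_between_enabled {E : Type} (ent : enabling E) (x y : set E) :
  pure ent -> subset x y ->
  (forall Z, subset x Z -> subset Z y -> left_closed_conf ent Z) ->
  forall Z, subset Z y -> exists W, subset W x /\ ent W Z.
Proof.
  intros Hpure Hxy Hbetween Z HZy.
  assert (HxZ_conf : left_closed_conf ent (setU x Z)).
  { apply Hbetween; [apply subsetUl | exact (subUset x Z y Hxy HZy)]. }
  destruct (HxZ_conf Z (subsetUr x Z)) as [W [HW Hent]].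
  exists W; split; [exact (subset_setU_disjoint W x Z HW (Hpure W Z Hent)) | exact Hent].
Qed.

Theorem mainTheorem10 (E : Type) (ent : enabling E) (x y : set E) :
  pure ent ->
  left_closed_conf ent x ->
  left_closed_conf ent y ->
  ((subset x y /\ forall Z, subset Z y -> exists W, subset W x /\ ent W Z)
   <->
   (subset x y /\ forall Z, subset x Z -> subset Z y -> left_closed_conf ent Z)).
Proof.
  intros Hpure _ _; split; intros [Hxy H]; split; try exact Hxy.
  - exact (enabled_from_left_closed_between ent x y H).
  - exact (left_closed_between_enabled ent x y Hpure Hxy H).
Qed.
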